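(* Any Schur positive connected bipartite graph has a balanced stable bipartition, namely, the cardinalities of the two parts differ by $1$ or $0$.
   Context: A graph $G$ is Schur positive if its chromatic symmetric function $X_G=\sum_{\kappa}\prod_{v\in V(G)}x_{\kappa(v)}$ (sum over proper colorings $\kappa$) has nonnegative coefficients in the Schur basis. A stable bipartition of $G$ is a partition of $V(G)$ into two stable (independent) sets. *)

From HB Require Import structures.
From mathcomp Require Import all_boot all_order all_algebra.
From mathcomp Require Import mpoly.
Set Implicit Arguments. Unset Strict Implicit. Unset Printing Implicit Defensive.
Import Order.TTheory GRing.Theory Num.Theory.
Local Open Scope ring_scope.

Definition stable (V : finType) (e : rel V) (A : {set V}) : bool :=
  [forall x in A, forall y in A, ~~ e x y].

Definition stable_bipartition (V : finType) (e : rel V) (A : {set V}) : bool :=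
  stable e A && stable e (~: A).

Definition bipartite (V : finType) (e : rel V) : Prop :=
  exists A : {set V}, stable_bipartition e A.

Definition connected (V : finType) (e : rel V) : Prop :=
  forall x y : V, connect e x y.

Definition proper_col (V : finType) (e : rel V) (k : nat) (f : {ffun V -> 'I_k}) : bool :=
  [forall x, forall y, e x y ==> (f x != f y)].

(* chromatic symmetric function X_G restricted to k variables x_0..x_{k-1} *)
Definition chromX (V : finType) (e : rel V) (k : nat) : {mpoly int[k]} :=
  \sum_(f : {ffun V -> 'I_k} | proper_col e f) \prod_(v : V) 'X_(f v).

Definition is_partition (n : nat) (la : seq nat) : bool :=
  [&& sorted geq la, all (fun x => 0 < x)%N la & sumn la == n].

Definition in_shape (la : seq nat) (d : nat) (c : 'I_d * 'I_d) : bool :=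
  (c.2 < nth 0 la c.1)%N.

(* semistandard Young tableau of shape la with entries in 'I_k: cells of the
   diagram carry Some entry, all other grid positions carry None; rows weakly
   increase, columns strictly increase *)
Definition ssyt (la : seq nat) (k : nat)
    (T : {ffun 'I_(sumn la) * 'I_(sumn la) -> option 'I_k}) : bool :=
  [forall c, (T c != None) == in_shape la c] &&
  [forall i, forall j, forall j',
     [&& in_shape la (i, j), in_shape la (i, j') & (j < j')%N] ==>
     (if (T (i, j), T (i, j')) is (Some a, Some b) then (a <= b)%N else false)] &&
  [forall i, forall i', forall j,
     [&& in_shape la (i, j), in_shape la (i', j) & (i < i')%N] ==>
     (if (T (i, j), T (i', j)) is (Some a, Some b) then (a < b)%N else false)].

Definition schur (k : nat) (la : seq nat) : {mpoly int[k]} :=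
  \sum_(T : {ffun 'I_(sumn la) * 'I_(sumn la) -> option 'I_k} | @ssyt la k T)
     \prod_(c : 'I_(sumn la) * 'I_(sumn la))
        (if T c is Some a then 'X_a else 1).

(* X_G is homogeneous of degree n = #|V|, and the
   restriction Lambda^n -> Lambda_n^n to n variables is an isomorphism sending
   s_la to s_la(x_1..x_n); hence X_G is Schur positive iff its restriction to
   n variables is a nonnegative combination of the s_la(x_1..x_n), la |- n. *)
Definition schur_positive (V : finType) (e : rel V) : Prop :=
  exists (s : seq (seq nat)) (c : seq nat -> int),
    [/\ uniq s, all (is_partition #|V|) s,
        (forall la, la \in s -> 0 <= c la) &
        chromX e #|V| = \sum_(la <- s) c la *: schur #|V| la].

From mathcomp Require Import all_boot all_order all_algebra.
From mathcomp Require Import mpoly.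
From mathcomp Require Import zify.
Set Implicit Arguments. Unset Strict Implicit. Unset Printing Implicit Defensive.
Import Order.TTheory GRing.Theory Num.Theory.

(* Suppose A is a stable bipartition with a = #|A| >= #|~: A| + 2 = b + 2.
   Colouring A by x0 and ~: A by x1 shows that x0^a x1^b occurs in X_G, while by
   connectivity A and ~: A are the only stable sets of a bipartition, so no proper
   colouring has content x0^(a-1) x1^(b+1).  Schur positivity yields a Schur function
   s_la with positive coefficient in X_G and a semistandard tableau of shape la and
   content x0^a x1^b.  Its letters x0 all lie in the first row, and no cell lies below
   the rightmost one: the row underneath would start with at least a > b letters x1.
   Relabelling that cell by x1 gives a tableau of content x0^(a-1) x1^(b+1), which
   therefore occurs in X_G: a contradiction. *)

Lemma card_set_sum (I : finType) (P : pred I) : (\sum_i (P i : nat))%N = #|[set i | P i]|.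
Proof.
rewrite cardsE -sum1_card [in RHS]big_mkcond /=; apply: eq_bigr => i _.
by rewrite unfold_in; case: (P i).
Qed.

Section Content.
Variables (I : finType) (k : nat).
Implicit Types (g : I -> option 'I_k) (x y : 'I_k).

Definition content g : 'X_{1..k} := [multinom #|[set i | g i == Some x]| | x < k].

Lemma contentE g x : content g x = #|[set i | g i == Some x]|.
Proof. exact: mnmE. Qed.

Lemma prod_optionXE (R : nzRingType) g :
  (\prod_i (if g i is Some x then 'X_x else 1) = 'X_[content g] :> {mpoly R[k]})%R.
Proof.
rewrite (eq_bigr (fun i => 'X_[if g i is Some x then U_(x) else 0%MM])); last first.
  by move=> i _; case: (g i) => [//|]; rewrite mpolyX0.
rewrite mprodXE; congr 'X_[_]; apply/mnmP => x.
rewrite mnm_sumE contentE -card_set_sum; apply: eq_bigr => i _.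
by case: (g i) => [y|]; rewrite ?mnm1E ?mnm0E.
Qed.

Lemma mcoeff_sum_prod_optionX (R : nzRingType) (J : finType) (P : pred J)
    (g : J -> I -> option 'I_k) m :
  (mcoeff m (\sum_(j | P j) \prod_i (if g j i is Some x then 'X_x else 1) : {mpoly R[k]})
   = #|[set j | P j & content (g j) == m]|%:R)%R.
Proof.
rewrite raddf_sum -(card_set_sum (fun j => P j && (content (g j) == m))) natr_sum big_mkcond /=.
apply: eq_bigr => j _; rewrite prod_optionXE mcoeffX.
by case: (P j); case: (content (g j) == m).
Qed.

Definition ffun_set (g : {ffun I -> option 'I_k}) (c : I) y : {ffun I -> option 'I_k} :=
  [ffun i => if i == c then Some y else g i].

Lemma content_ffun_set (g : {ffun I -> option 'I_k}) c x y :
  (content (ffun_set g c y) x + (g c == Some x) = content g x + (y == x))%N.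
Proof.
rewrite !contentE (cardsD1 c [set i | g i == Some x]).
rewrite (cardsD1 c [set i | ffun_set g c y i == Some x]) !inE !ffunE eqxx.
have -> : [set i | ffun_set g c y i == Some x] :\ c = [set i | g i == Some x] :\ c.
  by apply/setP => i; rewrite !inE ffunE; case: eqP.
by rewrite (inj_eq Some_inj); lia.
Qed.

(* The exponent of x0^p x1^q; when x0 = x1 it is just that of x0^p. *)
Definition content2 (x0 x1 : 'I_k) (p q : nat) : 'X_{1..k} :=
  [multinom if x == x0 then p else if x == x1 then q else 0%N | x < k].

Section TwoValues.
Variables (g : I -> option 'I_k) (x0 x1 : 'I_k) (p q : nat).
Hypothesis g_content : content g = content2 x0 x1 p q.

Lemma content2_count0 : #|[set i | g i == Some x0]| = p.
Proof. by rewrite -contentE g_content mnmE eqxx. Qed.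

Lemma content2_count1 : x0 != x1 -> #|[set i | g i == Some x1]| = q.
Proof. by move=> x01; rewrite -contentE g_content mnmE eq_sym (negbTE x01) eqxx. Qed.

Lemma content2_values i x : g i = Some x -> x = x0 \/ x = x1.
Proof.
move=> gi; case: (eqVneq x x0) => [|n0]; first by left.
case: (eqVneq x x1) => [|n1]; first by right.
have /eqP : content g x = 0%N by rewrite g_content mnmE (negbTE n0) (negbTE n1).
rewrite contentE cards_eq0 => /eqP no_x.
have : i \in [set i | g i == Some x] by rewrite inE gi.
by rewrite no_x inE.
Qed.

End TwoValues.
End Content.

Lemma mcoeff_chromX (V : finType) (e : rel V) k m :
  (mcoeff m (chromX e k)
   = #|[set f | proper_col e f & content (fun v => Some (f v)) == m]|%:R)%R.
Proof. exact: (mcoeff_sum_prod_optionX int (@proper_col V e k) (fun f v => Some (f v))). Qed.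

Lemma mcoeff_schur k la m :
  (mcoeff m (schur k la) = #|[set T | @ssyt la k T & content T == m]|%:R)%R.
Proof. exact: (mcoeff_sum_prod_optionX int (@ssyt la k) (fun T c => T c)). Qed.

Lemma mcoeff_nonneg_comb_gt0 (R : numDomainType) n (I : eqType) (s : seq I)
    (c : I -> R) (F : I -> {mpoly R[n]}) m :
  (forall i, i \in s -> 0 <= c i)%R -> (forall i, i \in s -> 0 <= mcoeff m (F i))%R ->
  (0 < mcoeff m (\sum_(i <- s) c i *: F i))%R
  = has (fun i => (0 < c i) && (0 < mcoeff m (F i)))%R s.
Proof.
move=> c_ge0 F_ge0; rewrite raddf_sum big_seq /=.
have terms_ge0 i : i \in s -> (0 <= mcoeff m (c i *: F i))%R.
  by move=> si; rewrite mcoeffZ mulr_ge0 ?c_ge0 ?F_ge0.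
rewrite lt0r sumr_ge0 // andbT psumr_neq0 //.
apply: eq_in_has => i si; rewrite si mcoeffZ /=.
case: (c i =P 0%R) => [->|/eqP ci_neq0]; first by rewrite mul0r !ltxx.
have ci_gt0 : (0 < c i)%R by rewrite lt0r ci_neq0 c_ge0.
by rewrite ci_gt0 pmulr_rgt0.
Qed.

Section StableBipartition.
Variables (V : finType) (e : rel V).
Implicit Types (A B : {set V}).

Lemma stable_bipartitionC A : stable_bipartition e (~: A) = stable_bipartition e A.
Proof. by rewrite /stable_bipartition setCK andbC. Qed.

Lemma stable_bipartition_edge A x y :
  stable_bipartition e A -> e x y -> (x \in A) = (y \notin A).
Proof.
case/andP=> /forall_inP stA /forall_inP stCA exy.
case xA: (x \in A); case yA: (y \in A) => //=.
  by move/forall_inP: (stA x xA) => /(_ y yA); rewrite exy.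
have xCA : x \in ~: A by rewrite inE xA.
have yCA : y \in ~: A by rewrite inE yA.
by move/forall_inP: (stCA x xCA) => /(_ y yCA); rewrite exy.
Qed.

Lemma connected_stable_bipartition_unique A B :
  connected e -> stable_bipartition e A -> stable_bipartition e B ->
  B = A \/ B = ~: A.
Proof.
move=> conn stA stB.
pose agree v := (v \in A) == (v \in B).
have agree_edge x y : e x y -> agree x = agree y.
  move=> exy; rewrite /agree (stable_bipartition_edge stA exy).
  by rewrite (stable_bipartition_edge stB exy); case: (y \in A); case: (y \in B).
have agree_connect x y : connect e x y -> agree x = agree y.
  move=> /connectP [p pth ->]; elim: p x pth => [|z p IHp] x //=.
  by case/andP=> exz pz; rewrite (agree_edge _ _ exz) IHp.
case: (pickP (fun _ : V => true)) => [x0 _|V0]; last by left; apply/setP => v; move: (V0 v).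
have agree_x0 v : agree v = agree x0 by rewrite (agree_connect _ _ (conn x0 v)).
case ax0: (agree x0); [left | right]; apply/setP => v;
  have := agree_x0 v; rewrite ax0 /agree ?inE; first by move/eqP.
by case: (v \in A); case: (v \in B).
Qed.
End StableBipartition.

Section TwoColourings.
Variables (V : finType) (e : rel V) (k : nat) (x0 x1 : 'I_k).
Hypothesis x01 : x0 != x1.

Definition bipartition_colouring (A : {set V}) : {ffun V -> 'I_k} :=
  [ffun v => if v \in A then x0 else x1].

Lemma mcoeff_chromX_bipartition_gt0 A :
  stable_bipartition e A -> (0 < mcoeff (content2 x0 x1 #|A| #|~: A|) (chromX e k))%R.
Proof.
move=> stA; rewrite mcoeff_chromX ltr0n card_gt0; apply/set0Pn.
exists (bipartition_colouring A); rewrite inE; apply/andP; split.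
  apply/forallP => x; apply/forallP => y; apply/implyP => exy.
  rewrite /bipartition_colouring !ffunE (stable_bipartition_edge stA exy).
  by case: (y \in A); rewrite // eq_sym.
apply/eqP/mnmP => x; rewrite contentE mnmE /bipartition_colouring.
case: (eqVneq x x0) => [->|n0]; last case: (eqVneq x x1) => [->|n1].
- apply: eq_card => v; rewrite !inE ffunE (inj_eq Some_inj).
  by case: (v \in A); rewrite ?eqxx // eq_sym (negbTE x01).
- apply: eq_card => v; rewrite !inE ffunE (inj_eq Some_inj).
  by case: (v \in A); rewrite ?eqxx ?(negbTE x01).
- apply/eqP; rewrite cards_eq0; apply/eqP/setP => v; rewrite !inE ffunE (inj_eq Some_inj).
  by case: (v \in A); rewrite eq_sym ?(negbTE n0) ?(negbTE n1).
Qed.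

Lemma stable_bipartition_two_colouring (f : {ffun V -> 'I_k}) p q :
  proper_col e f -> content (fun v => Some (f v)) = content2 x0 x1 p q ->
  stable_bipartition e [set v | f v == x0].
Proof.
move=> /forallP f_proper f_content.
have f_edge x y : e x y -> f x != f y by move/forallP: (f_proper x) => /(_ y) /implyP.
have f_x1 v : f v != x0 -> f v = x1.
  by case: (content2_values f_content (erefl (Some (f v)))) => ->; rewrite ?eqxx.
apply/andP; split; apply/forall_inP => x xS; apply/forall_inP => y yS;
  apply/negP => /f_edge; move: xS yS; rewrite !inE.
  by move=> /eqP -> /eqP ->; rewrite eqxx.
by move=> /f_x1 -> /f_x1 ->; rewrite eqxx.
Qed.

Lemma mcoeff_chromX_content2_eq0 A p q :
  connected e -> stable_bipartition e A -> p != #|A| -> p != #|~: A| ->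
  mcoeff (content2 x0 x1 p q) (chromX e k) = 0%R.
Proof.
move=> conn stA pA pCA; rewrite mcoeff_chromX; apply/eqP; rewrite pnatr_eq0 cards_eq0.
apply/eqP/setP => f; rewrite !inE; apply/negP => /andP [f_proper /eqP f_content].
have stB := stable_bipartition_two_colouring f_proper f_content.
have cardB : #|[set v | f v == x0]| = p.
  rewrite -(content2_count0 f_content); apply: eq_card => v.
  by rewrite !inE ?(inj_eq Some_inj).
case: (connected_stable_bipartition_unique conn stA stB) => B_eq;
  by move: cardB pA pCA; rewrite B_eq => ->; rewrite eqxx.
Qed.
End TwoColourings.

Section Tableaux.
Variables (la : seq nat) (k : nat).
Local Notation d := (sumn la).
Local Notation tableau := {ffun 'I_d * 'I_d -> option 'I_k}.
Implicit Types (T : tableau) (c : 'I_d * 'I_d) (i j : 'I_d) (x y : 'I_k).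

Lemma in_shape_left i j j' : in_shape la (i, j) -> j' <= j -> in_shape la (i, j').
Proof. by rewrite /in_shape /= => j_in j'j; apply: leq_ltn_trans j_in. Qed.

Lemma in_shape_up i i' j :
  sorted geq la -> in_shape la (i, j) -> i' <= i -> in_shape la (i', j).
Proof.
rewrite /in_shape /= => la_sorted.
case: (ltnP i (size la)) => [i_lt|i_ge]; last by rewrite nth_default.
move=> j_in i'i; apply: (leq_trans j_in).
have geq_trans : transitive geq by move=> ? ? ? h1 h2; apply: leq_trans h2 h1.
apply: (sorted_leq_nth geq_trans (fun n => leqnn n) 0 la_sorted) => //.
by rewrite inE (leq_ltn_trans i'i).
Qed.

Lemma ssytP T :
  reflect [/\ forall c, (T c != None) = in_shape la c,
              forall i j j' x y, j < j' -> T (i, j) = Some x -> T (i, j') = Some y -> x <= y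
            & forall i i' j x y, i < i' -> T (i, j) = Some x -> T (i', j) = Some y -> x < y]
          (ssyt T).
Proof.
apply: (iffP idP).
  case/andP => /andP [/forallP shape /forallP row] /forallP col.
  have T_shape c : (T c != None) = in_shape la c by apply/eqP: (shape c).
  split => // [i j j' x y | i i' j x y] lt Tx Ty.
    move/forallP: (row i) => /(_ j) /forallP /(_ j') /implyP.
    by rewrite -!T_shape Tx Ty lt; apply.
  move/forallP: (col i) => /(_ i') /forallP /(_ j) /implyP.
  by rewrite -!T_shape Tx Ty lt; apply.
case=> shape row col; apply/andP; split; first (apply/andP; split).
- by apply/forallP => c; rewrite shape.
- apply/forallP => i; apply/forallP => j; apply/forallP => j'.
  apply/implyP => /and3P []; rewrite -!shape.
  case Tx: (T (i, j)) => [x|] // _; case Ty: (T (i, j')) => [y|] // _.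
  by move=> lt; apply: row lt Tx Ty.
- apply/forallP => i; apply/forallP => i'; apply/forallP => j.
  apply/implyP => /and3P []; rewrite -!shape.
  case Tx: (T (i, j)) => [x|] // _; case Ty: (T (i', j)) => [y|] // _.
  by move=> lt; apply: col lt Tx Ty.
Qed.

Lemma ssyt_in_shapeP T c : ssyt T -> reflect (exists x, T c = Some x) (in_shape la c).
Proof.
case/ssytP => shape _ _; rewrite -shape.
by case: (T c) => [x|]; constructor; [exists x | case].
Qed.

Lemma ssyt_col T i i' j x y :
  ssyt T -> i < i' -> T (i, j) = Some x -> T (i', j) = Some y -> x < y.
Proof. by case/ssytP => _ _; apply. Qed.

Lemma ssyt_ffun_set T c y :
  ssyt T -> in_shape la c ->
  (forall j x, c.2 < j -> T (c.1, j) = Some x -> y <= x) ->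
  (forall j x, j < c.2 -> T (c.1, j) = Some x -> x <= y) ->
  (forall i x, c.1 < i -> T (i, c.2) = Some x -> y < x) ->
  (forall i x, i < c.1 -> T (i, c.2) = Some x -> x < y) ->
  ssyt (ffun_set T c y).
Proof.
case: c => ci cj /ssytP [shape row col] c_in /= right_ge left_le below_gt above_lt.
apply/ssytP; split.
- by move=> c; rewrite ffunE; case: (eqVneq c (ci, cj)) => [->|_]; rewrite ?shape.
- move=> i j j' x x'; rewrite !ffunE !xpair_eqE.
  case: (eqVneq i ci) => [->|_] /=; last exact: row.
  case: (eqVneq j cj) => [->|_]; case: (eqVneq j' cj) => [->|_] /=.
  + by rewrite ltnn.
  + by move=> lt [<-]; exact: right_ge lt.
  + by move=> lt Tx [<-]; exact: left_le lt Tx.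
  + exact: row.
- move=> i i' j x x'; rewrite !ffunE !xpair_eqE.
  case: (eqVneq j cj) => [->|_]; last by rewrite !andbF; apply: col.
  case: (eqVneq i ci) => [->|_]; case: (eqVneq i' ci) => [->|_] /=.
  + by rewrite ltnn.
  + by move=> lt [<-]; exact: below_gt lt.
  + by move=> lt Tx [<-]; exact: above_lt lt Tx.
  + exact: col.
Qed.

Definition row_prefix i j : {set 'I_d * 'I_d} :=
  [set (i, widen_ord (ltn_ord j) m) | m : 'I_j.+1].

Lemma card_row_prefix i j : #|row_prefix i j| = j.+1.
Proof. by rewrite card_imset ?card_ord // => m m' [] eq_m; apply: val_inj. Qed.

Lemma mem_row_prefix i j c : (c \in row_prefix i j) = (c.1 == i) && (c.2 <= j).
Proof.
apply/imsetP/andP => [[m _ ->] | [/eqP c1 c2]]; first by rewrite /= eqxx -ltnS.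
exists (Ordinal (c2 : c.2 < j.+1)) => //.
by case: c c1 c2 => ci cj /= -> c2; congr pair; apply: val_inj.
Qed.

Section TwoLetterTableau.
Variables (x0 x1 : 'I_k) (a b : nat) (T : tableau).
Hypotheses (la_sorted : sorted geq la) (x01 : x0 < x1) (ba : b.+2 <= a)
  (T_ssyt : ssyt T) (T_content : content T = content2 x0 x1 a b).

Let x0_neq_x1 : x0 != x1.
Proof. by apply/eqP => eq01; move: x01; rewrite eq01 ltnn. Qed.

Let T_entry c x : T c = Some x -> x = x0 \/ x = x1.
Proof. exact: (content2_values T_content). Qed.

Let T_entry_bounds c x : T c = Some x -> x0 <= x <= x1.
Proof. by case/T_entry => ->; rewrite leqnn ltnW. Qed.

Lemma x0_in_top_row c i : T c = Some x0 -> i < c.1 -> False.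
Proof.
case: c => ci cj /= Tc above.
have c_in : in_shape la (ci, cj) by apply/(ssyt_in_shapeP _ T_ssyt); exists x0.
have /(ssyt_in_shapeP _ T_ssyt) [x Tx] := in_shape_up la_sorted c_in (ltnW above).
have := ssyt_col T_ssyt above Tx Tc.
by case/andP: (T_entry_bounds Tx); rewrite leqNgt => /negbTE ->.
Qed.

Lemma x0_corner :
  exists2 cs, T cs = Some x0 & forall c, T c = Some x0 -> c.1 = cs.1 /\ c.2 <= cs.2.
Proof.
have : 0 < #|[set c | T c == Some x0]| by rewrite (content2_count0 T_content); lia.
case/card_gt0P => c0; rewrite inE => Tc0.
case: (@arg_maxnP _ c0 (fun c => T c == Some x0) (fun c => val c.2) Tc0) => cs /eqP T_cs cs_max.
exists cs => // c Tc; split; last exact/cs_max/eqP.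
have [lt|gt|eq] := ltngtP c.1 cs.1; last exact: val_inj.
  by case: (x0_in_top_row T_cs lt).
by case: (x0_in_top_row Tc gt).
Qed.

Section Corner.
Variable cs : 'I_d * 'I_d.
Hypotheses (T_cs : T cs = Some x0)
  (cs_max : forall c, T c = Some x0 -> c.1 = cs.1 /\ c.2 <= cs.2).

Lemma a_le_corner : a <= cs.2.+1.
Proof.
rewrite -(content2_count0 T_content) -(card_row_prefix cs.1 cs.2).
apply/subset_leq_card/subsetP => c; rewrite inE mem_row_prefix => /eqP /cs_max [-> ->].
by rewrite eqxx.
Qed.

Lemma no_cell_below_corner i : cs.1 < i -> ~~ in_shape la (i, cs.2).
Proof.
move=> below; apply/negP => in_below.
suff : cs.2.+1 <= b by move: a_le_corner ba; lia.
rewrite -(content2_count1 T_content x0_neq_x1) -(card_row_prefix i cs.2).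
apply/subset_leq_card/subsetP => -[i' j]; rewrite mem_row_prefix inE /=.
case/andP => /eqP -> j_le.
have ij_in : in_shape la (i, j) := in_shape_left in_below j_le.
have /(ssyt_in_shapeP _ T_ssyt) [y Ty] := ij_in.
have /(ssyt_in_shapeP _ T_ssyt) [x Tx] := in_shape_up la_sorted ij_in (ltnW below).
have xy := ssyt_col T_ssyt below Tx Ty.
rewrite Ty; case: (T_entry Ty) => [y0|->//].
by case/andP: (T_entry_bounds Tx); rewrite leqNgt (leq_trans xy) // y0.
Qed.

Lemma corner_set_ssyt : ssyt (ffun_set T cs x1).
Proof.
apply: ssyt_ffun_set => //.
- by apply/(ssyt_in_shapeP _ T_ssyt); exists x0.
- move=> j x right Tx; case: (T_entry Tx) => [x_eq|->//].
  have [_] := cs_max (c := (cs.1, j)) (etrans Tx (congr1 Some x_eq)).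
  by rewrite leqNgt right.
- by move=> j x _ /T_entry_bounds /andP [].
- move=> i x below Tx; case/negP: (no_cell_below_corner below).
  by apply/(ssyt_in_shapeP _ T_ssyt); exists x.
- by move=> i x above _; case: (x0_in_top_row T_cs above).
Qed.

Lemma corner_set_content : content (ffun_set T cs x1) = content2 x0 x1 a.-1 b.+1.
Proof.
apply/mnmP => x; have := content_ffun_set T cs x x1.
rewrite T_cs T_content !mnmE (inj_eq Some_inj).
case: (eqVneq x x0) => [->|n0]; first by rewrite eq_sym (negbTE x0_neq_x1) /=; lia.
by case: (eqVneq x x1) => [->|n1]; rewrite ?eqxx /=; lia.
Qed.
End Corner.

Lemma ssyt_content2_shift :
  exists2 T' : tableau, ssyt T' & content T' = content2 x0 x1 a.-1 b.+1.
Proof.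
have [cs T_cs cs_max] := x0_corner.
exists (ffun_set T cs x1); [exact: corner_set_ssyt | exact: corner_set_content].
Qed.
End TwoLetterTableau.
End Tableaux.

Lemma mcoeff_schur_content2_shift la k (x0 x1 : 'I_k) a b :
  sorted geq la -> x0 < x1 -> b.+2 <= a ->
  (0 < mcoeff (content2 x0 x1 a b) (schur k la))%R ->
  (0 < mcoeff (content2 x0 x1 a.-1 b.+1) (schur k la))%R.
Proof.
move=> la_sorted x01 ba; rewrite !mcoeff_schur !ltr0n !card_gt0.
case/set0Pn => T; rewrite inE => /andP [T_ssyt /eqP T_content].
have [T' T'_ssyt T'_content] := ssyt_content2_shift la_sorted x01 ba T_ssyt T_content.
by apply/set0Pn; exists T'; rewrite inE T'_ssyt T'_content eqxx.
Qed.

Lemma schur_positive_balanced (V : finType) (e : rel V) (A : {set V}) :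
  connected e -> schur_positive e -> stable_bipartition e A -> #|A| <= #|~: A|.+1.
Proof.
move=> conn [s [c [_ s_part c_ge0 X_e]]] stA; rewrite leqNgt; apply/negP => unbalanced.
have n_gt1 : 1 < #|V| by rewrite -(cardsC A); lia.
pose x0 : 'I_#|V| := Ordinal (ltnW n_gt1).
pose x1 : 'I_#|V| := Ordinal n_gt1.
have schur_ge0 m la : la \in s -> (0 <= mcoeff m (schur #|V| la))%R.
  by rewrite mcoeff_schur ler0n.
have := mcoeff_chromX_bipartition_gt0 (x0 := x0) (x1 := x1) isT stA.
rewrite X_e (mcoeff_nonneg_comb_gt0 c_ge0 (schur_ge0 _)).
case/hasP => la la_s /andP [c_gt0 coef_gt0].
have la_sorted : sorted geq la by case/and3P: (allP s_part la la_s).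
have : (0 < mcoeff (content2 x0 x1 #|A|.-1 #|~: A|.+1) (chromX e #|V|))%R.
  rewrite X_e (mcoeff_nonneg_comb_gt0 c_ge0 (schur_ge0 _)); apply/hasP; exists la => //.
  by rewrite c_gt0 (mcoeff_schur_content2_shift la_sorted _ unbalanced coef_gt0).
by rewrite (mcoeff_chromX_content2_eq0 _ _ _ conn stA) ?ltxx //; lia.
Qed.

Theorem theorem3p3 (V : finType) (e : rel V)
  (e_sym : ssrbool.symmetric e) (e_irr : irreflexive e)
  (G_conn : connected e) (G_bip : bipartite e) (G_sp : schur_positive e) :
  exists A : {set V},
    [&& stable_bipartition e A, (#|A| <= #|~: A|.+1)%N & (#|~: A| <= #|A|.+1)%N].
Proof.
case: G_bip => A stA; exists A.
have stCA : stable_bipartition e (~: A) by rewrite stable_bipartitionC.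
rewrite stA (schur_positive_balanced G_conn G_sp stA) /=.
by have := schur_positive_balanced G_conn G_sp stCA; rewrite setCK.
Qed.
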